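(* Let $((x_1,\hat{y}_1,\hat{\gamma}_1), \dots, (x_T,\hat{y}_T,\hat{\gamma}_T))$ be a sequence of training examples $x_t \in \mathbb{R}^n$ together with label estimates $\hat{y}_t \in \{\pm 1\}$ and margin estimates $\hat{\gamma}_t > 0$, sorted in descending order of the margin estimates, and with $\|x_t\| \leq R$ for all $t \in \{1,\ldots,T\}$. Let $\hat{\gamma}=\min (\hat{\gamma}_1,\dots,\hat{\gamma}_T)=\hat{\gamma}_T$ and $K=\lceil R/\hat{\gamma} \rceil-1$. Suppose there exists a vector $u \in \mathbb{R}^n$ such that $\hat{y}_t \langle u, x_t\rangle \geq \hat{\gamma}$ for all $t$. Suppose the examples are divided into $K$ regions $1,\ldots,K$ such that every example $x_{t}$ in region $k$ satisfies $\hat{y}_{t}\langle x_{t}, u\rangle \geq k\hat{\gamma}$. Run the perceptron algorithm on this sequence (in the given order, with labels $\hat y_t$). Let $\varepsilon_1,\ldots,\varepsilon_K$ denote the number of mistakes made by the perceptron on the examples in each of the $K$ regions, let $\varepsilon=\sum_{k=1}^K \varepsilon_k$ be the total number of mistakes, and let $\varepsilon_s=\sqrt{\frac{1}{K}\sum_{k=1}^K (\varepsilon_k-\varepsilon/K)^2}$ be the standard deviation of $\{\varepsilon_1,\ldots,\varepsilon_K\}$. Then \[ \sqrt{\varepsilon} \leq \frac{R\|u\| + \sqrt{R^2\|u\|^2+\varepsilon_s K(K+1)^2\sqrt{K-1}\,\hat{\gamma}^2}}{\hat{\gamma}(K+1)} . \]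
   Context: The perceptron algorithm on a sequence $(x_1,\hat y_1),\ldots,(x_T,\hat y_T)$ with $x_t\in\mathbb{R}^n$, $\hat y_t\in\{\pm1\}$: start with $w_1 = 0$; at step $t$, predict the label $\mathrm{sign}(\langle w_t, x_t\rangle)$; a mistake occurs at step $t$ if $\hat y_t \langle w_t, x_t\rangle \le 0$, in which case $w_{t+1} = w_t + \hat y_t x_t$; otherwise $w_{t+1} = w_t$. Here $\langle\cdot,\cdot\rangle$ is the Euclidean inner product and $\|\cdot\|$ the Euclidean norm. *)

From mathcomp Require Import all_boot all_order all_algebra.
From mathcomp Require Import reals.
Set Implicit Arguments. Unset Strict Implicit. Unset Printing Implicit Defensive.
Import Order.TTheory GRing.Theory Num.Theory.
Local Open Scope ring_scope.

Definition dotv (R : realType) (n : nat) (u v : 'rV[R]_n) : R :=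
  \sum_(i < n) u ord0 i * v ord0 i.
Definition normv (R : realType) (n : nat) (u : 'rV[R]_n) : R :=
  Num.sqrt (dotv u u).

Fixpoint perc_w (R : realType) (n : nat) (x : nat -> 'rV[R]_n) (y : nat -> R)
    (t : nat) : 'rV[R]_n :=
  match t with
  | 0 => 0
  | t'.+1 => if y t' * dotv (perc_w x y t') (x t') <= 0
             then perc_w x y t' + y t' *: x t' else perc_w x y t'
  end.

Definition perc_mistake (R : realType) (n : nat) (x : nat -> 'rV[R]_n)
    (y : nat -> R) (t : nat) : bool :=
  y t * dotv (perc_w x y t) (x t) <= 0.

Definition region_mistakes (R : realType) (n T : nat) (x : nat -> 'rV[R]_n)
    (y : nat -> R) (reg : nat -> nat) (k : nat) : nat :=
  \sum_(t < T | (reg t == k) && perc_mistake x y t) 1%N.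

Definition total_mistakes (R : realType) (n T : nat) (x : nat -> 'rV[R]_n)
    (y : nat -> R) (reg : nat -> nat) (K : nat) : nat :=
  \sum_(1 <= k < K.+1) region_mistakes T x y reg k.

Definition mistakes_std (R : realType) (n T : nat) (x : nat -> 'rV[R]_n)
    (y : nat -> R) (reg : nat -> nat) (K : nat) : R :=
  Num.sqrt (K%:R^-1 * \sum_(1 <= k < K.+1)
     ((region_mistakes T x y reg k)%:R
        - (total_mistakes T x y reg K)%:R / K%:R) ^+ 2).

From mathcomp Require Import all_boot all_order all_algebra.
From mathcomp Require Import reals ring lra.
Import Order.TTheory GRing.Theory Num.Theory.
Set Implicit Arguments. Unset Strict Implicit. Unset Printing Implicit Defensive.
Local Open Scope ring_scope.

(* The final perceptron weight is w = sum of y_t x_t over the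
   mistakes, so |w|^2 <= eps R^2 (each mistake adds at most R^2), while
   <w, u> >= ghat sum_k k eps_k by the region margins.  Centering,
   sum_k k eps_k = (K+1)/2 eps + sum_k (k - (K+1)/2) (eps_k - eps/K), and
   Cauchy-Schwarz bounds the last sum below by -K (K-1)/2 eps_s.  Together with
   <w, u> <= |w| |u| this is a quadratic inequality in sqrt eps, and the claim
   is its larger root. *)

Lemma Cauchy_Schwarz_sum_sqr (R : realDomainType) (I : Type) (r : seq I) (a b : I -> R) :
  (\sum_(i <- r) a i * b i) ^+ 2 <=
  (\sum_(i <- r) a i ^+ 2) * (\sum_(i <- r) b i ^+ 2).
Proof.
(* Lagrange's identity. *)
have : 0 <= \sum_(i <- r) \sum_(j <- r) (a i * b j - a j * b i) ^+ 2.
  by apply: sumr_ge0 => i _; apply: sumr_ge0 => j _; apply: sqr_ge0.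
have -> : \sum_(i <- r) \sum_(j <- r) (a i * b j - a j * b i) ^+ 2 =
  \sum_(i <- r) \sum_(j <- r) (a i ^+ 2 * b j ^+ 2)
  + \sum_(i <- r) \sum_(j <- r) (b i ^+ 2 * a j ^+ 2)
  - (\sum_(i <- r) \sum_(j <- r) ((a i * b i) * (a j * b j))) *+ 2.
  rewrite -big_split -sumrMnl -sumrB; apply: eq_bigr => i _.
  rewrite -big_split -sumrMnl -sumrB; apply: eq_bigr => j _.
  by rewrite /=; ring.
rewrite -!big_distrlr /= (mulrC (\sum_(i <- r) b i ^+ 2)) expr2.
lra.
Qed.

Lemma Cauchy_Schwarz_sum (R : rcfType) (I : Type) (r : seq I) (a b : I -> R) :
  \sum_(i <- r) a i * b i <=
  Num.sqrt (\sum_(i <- r) a i ^+ 2) * Num.sqrt (\sum_(i <- r) b i ^+ 2).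
Proof.
have a_ge0 : 0 <= \sum_(i <- r) a i ^+ 2 by apply: sumr_ge0 => i _; apply: sqr_ge0.
rewrite -sqrtrM // (le_trans (ler_norm _)) // -sqrtr_sqr.
exact/ler_wsqrtr/Cauchy_Schwarz_sum_sqr.
Qed.

Lemma quadratic_le_root (R : rcfType) (a b d s : R) :
  0 < a -> a * s ^+ 2 <= b * s + d ->
  s <= (b + Num.sqrt (b ^+ 2 + 4 * a * d)) / (2 * a).
Proof.
move=> a_gt0 quad.
have disc : (2 * a * s - b) ^+ 2 <= b ^+ 2 + 4 * a * d.
  have := ler_wpM2l (ltW a_gt0) quad; rewrite !expr2; nra.
rewrite ler_pdivlMr ?mulr_gt0 // -lerBlDl mulrC (le_trans (ler_norm _)) //.
by rewrite -sqrtr_sqr ler_wsqrtr.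
Qed.

Section InnerProduct.
Variables (R : realType) (n : nat).
Implicit Types (a b c : 'rV[R]_n) (k : R).

Lemma dotvC a b : dotv a b = dotv b a.
Proof. by apply: eq_bigr => i _; rewrite mulrC. Qed.

Lemma dotvDl a b c : dotv (a + b) c = dotv a c + dotv b c.
Proof. by rewrite /dotv -big_split; apply: eq_bigr => i _; rewrite mxE mulrDl. Qed.

Lemma dotvZl k a b : dotv (k *: a) b = k * dotv a b.
Proof. by rewrite /dotv mulr_sumr; apply: eq_bigr => i _; rewrite mxE mulrA. Qed.

Lemma dotvZr k a b : dotv a (k *: b) = k * dotv a b.
Proof. by rewrite dotvC dotvZl dotvC. Qed.

Lemma dot0v a : dotv 0 a = 0.
Proof. by rewrite /dotv big1 // => i _; rewrite mxE mul0r. Qed.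

Lemma dotvv_ge0 a : 0 <= dotv a a.
Proof. by apply: sumr_ge0 => i _; rewrite -expr2 sqr_ge0. Qed.

Lemma dotvDD a b : dotv (a + b) (a + b) = dotv a a + 2 * dotv a b + dotv b b.
Proof. by rewrite dotvDl !(dotvC _ (a + b)) !dotvDl (dotvC b a); ring. Qed.

Lemma normv_ge0 a : 0 <= normv a.
Proof. exact: sqrtr_ge0. Qed.

Lemma sqr_normv a : normv a ^+ 2 = dotv a a.
Proof. by rewrite sqr_sqrtr // dotvv_ge0. Qed.

Lemma dotv_le_normv a b : dotv a b <= normv a * normv b.
Proof.
have := Cauchy_Schwarz_sum (index_enum 'I_n) (fun i => a ord0 i) (fun i => b ord0 i).
by rewrite !(eq_bigr _ (fun i _ => expr2 _)).
Qed.

End InnerProduct.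

Lemma subr1_le_sqrt (R : rcfType) (z : R) :
  1 <= z -> z - 1 <= (z + 1) * Num.sqrt (z - 1).
Proof.
move=> z_ge1; have q_ge0 := sqrtr_ge0 (z - 1).
have q_sqr : Num.sqrt (z - 1) ^+ 2 = z - 1 by rewrite sqr_sqrtr // subr_ge0.
by rewrite -[X in X <= _]q_sqr; nra.
Qed.

Definition stddev (R : rcfType) (K : nat) (e : nat -> R) : R :=
  Num.sqrt (K%:R^-1 * \sum_(1 <= k < K.+1)
              (e k - (\sum_(1 <= j < K.+1) e j) / K%:R) ^+ 2).

Section IndexWeightedSum.
Variables (R : rcfType) (K : nat).

Lemma sum_index_centered : \sum_(1 <= k < K.+1) (k%:R - (K%:R + 1) / 2 : R) = 0.
Proof.
have gauss : \sum_(1 <= k < K.+1) (k%:R : R) = K%:R * (K%:R + 1) / 2.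
  elim: (K) => [|m IH]; first by rewrite big_geq // mul0r mul0r.
  by rewrite big_nat_recr //= IH -addn1 natrD; field.
by rewrite sumrB gauss sumr_const_nat subn1 -mulr_natl; field.
Qed.

Lemma sum_index_centered_sqr_le :
  \sum_(1 <= k < K.+1) (k%:R - (K%:R + 1) / 2) ^+ 2 <= K%:R * ((K%:R - 1) / 2) ^+ 2 :> R.
Proof.
have -> : K%:R * ((K%:R - 1) / 2) ^+ 2 = \sum_(1 <= k < K.+1) ((K%:R - 1) / 2 : R) ^+ 2.
  by rewrite sumr_const_nat subn1 mulr_natl.
apply: ler_sum_nat => k /andP[k_ge1 k_le].
have : 1 <= (k%:R : R) <= K%:R by rewrite ler1n k_ge1 ler_nat -ltnS.
by rewrite !expr2 => /andP[? ?]; nra.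
Qed.

Hypothesis K_gt0 : (0 < K)%N.
Variable e : nat -> R.
Let mean := (\sum_(1 <= j < K.+1) e j) / K%:R.

Lemma sum_sqr_deviation :
  \sum_(1 <= k < K.+1) (e k - mean) ^+ 2 = K%:R * stddev K e ^+ 2.
Proof.
rewrite sqr_sqrtr ?mulrA ?mulfV ?mul1r // ?pnatr_eq0 -?lt0n //.
by rewrite mulr_ge0 ?invr_ge0 ?sumr_ge0 // => k _; apply: sqr_ge0.
Qed.

Lemma index_weighted_sum_ge :
  (K%:R + 1) / 2 * \sum_(1 <= k < K.+1) e k - K%:R * (K%:R - 1) / 2 * stddev K e
    <= \sum_(1 <= k < K.+1) k%:R * e k.
Proof.
set c : R := (K%:R + 1) / 2; set sd := stddev K e.
have centered : \sum_(1 <= k < K.+1) (k%:R - c) * (mean - e k) =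
                c * \sum_(1 <= k < K.+1) e k - \sum_(1 <= k < K.+1) k%:R * e k.
  rewrite (eq_bigr (fun k => mean * (k%:R - c) - (k%:R * e k - c * e k))) => [|k _].
    by rewrite !sumrB -!mulr_sumr sum_index_centered mulr0 sub0r opprB.
  by rewrite /=; ring.
have dev_sqr : \sum_(1 <= k < K.+1) (mean - e k) ^+ 2 = K%:R * sd ^+ 2.
  by rewrite -sum_sqr_deviation; apply: eq_bigr => k _; rewrite -sqrrN opprB.
have sd_ge0 : 0 <= sd := sqrtr_ge0 _.
have K_ge1 : 1 <= (K%:R : R) by rewrite ler1n.
have cs_bound : Num.sqrt (\sum_(1 <= k < K.+1) (k%:R - c) ^+ 2) *
                Num.sqrt (\sum_(1 <= k < K.+1) (mean - e k) ^+ 2)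
                  <= K%:R * (K%:R - 1) / 2 * sd.
  have bound_ge0 : 0 <= K%:R * (K%:R - 1) / 2 * sd.
    by rewrite !mulr_ge0 ?invr_ge0 // subr_ge0.
  rewrite -sqrtrM; last by apply: sumr_ge0 => k _; apply: sqr_ge0.
  rewrite -(ger0_norm bound_ge0) -sqrtr_sqr ler_wsqrtr //.
  have -> : (K%:R * (K%:R - 1) / 2 * sd) ^+ 2 = K%:R * ((K%:R - 1) / 2) ^+ 2 * (K%:R * sd ^+ 2).
    by rewrite /=; field.
  by rewrite dev_sqr ler_wpM2r ?mulr_ge0 ?sqr_ge0 ?ler0n ?sum_index_centered_sqr_le.
have := Cauchy_Schwarz_sum (index_iota 1 K.+1) (fun k => k%:R - c) (fun k => mean - e k).
rewrite centered; lra.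
Qed.

End IndexWeightedSum.

Section Perceptron.
Variables (R : realType) (n : nat) (x : nat -> 'rV[R]_n) (y : nat -> R).
Local Notation w := (perc_w x y).
Local Notation mistake := (perc_mistake x y).

Lemma dotv_perc_w u t :
  dotv (w t) u = \sum_(s < t | mistake s) y s * dotv (x s) u.
Proof.
elim: t => [|t IH]; first by rewrite big_ord0 dot0v.
rewrite big_mkcond big_ord_recr -big_mkcond /= -IH /perc_mistake.
by case: ifP; rewrite ?dotvDl ?dotvZl ?addr0.
Qed.

Lemma dotv_perc_w_self_le t :
  dotv (w t) (w t) <= \sum_(s < t | mistake s) y s ^+ 2 * dotv (x s) (x s).
Proof.
elim: t => [|t IH]; first by rewrite big_ord0 dot0v.
rewrite big_mkcond big_ord_recr -big_mkcond /= /perc_mistake.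
case: ifP => [wrong|_]; last by rewrite addr0.
rewrite dotvDD dotvZl !dotvZr; nra.
Qed.

Lemma normv_perc_w_le T Rb :
  0 <= Rb ->
  (forall t, (t < T)%N -> y t = 1 \/ y t = -1) ->
  (forall t, (t < T)%N -> normv (x t) <= Rb) ->
  normv (w T) <= Num.sqrt (\sum_(t < T | mistake t) 1) * Rb.
Proof.
move=> Rb_ge0 y_sign x_le.
rewrite -(ger0_norm Rb_ge0) -sqrtr_sqr -sqrtrM ?sumr_ge0 //.
rewrite -[normv _]ger0_norm ?normv_ge0 // -sqrtr_sqr ler_wsqrtr // sqr_normv mulr_suml.
apply: (le_trans (dotv_perc_w_self_le T)); apply: ler_sum => t _.
have y_sqr : y t ^+ 2 = 1 by case: (y_sign t (ltn_ord t)) => ->; rewrite ?sqrrN expr1n.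
by rewrite y_sqr !mul1r -sqr_normv ler_sqr ?nnegrE ?normv_ge0 ?x_le.
Qed.

End Perceptron.

Section Regions.
Variables (R : realType) (n T K : nat) (x : nat -> 'rV[R]_n) (y : nat -> R).
Variable reg : nat -> nat.
Hypothesis reg_range : forall t, (t < T)%N -> (1 <= reg t <= K)%N.

Lemma sum_mistakes_by_region (F : nat -> R) :
  \sum_(t < T | perc_mistake x y t) F (reg t) =
  \sum_(1 <= k < K.+1) F k * (region_mistakes T x y reg k)%:R.
Proof.
under [RHS]eq_bigr => k _ do
  rewrite /region_mistakes natr_sum mulr_sumr big_mkcond /=.
rewrite exchange_big /= [LHS]big_mkcond; apply: eq_bigr => t _.
case: ifP => [mis|_]; last by rewrite big1 // => k _; rewrite andbF.
rewrite (bigD1_seq (reg t)) ?iota_uniq ?mem_index_iota ?reg_range //=.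
by rewrite eqxx mulr1 big1 ?addr0 // => k /negbTE; rewrite eq_sym => ->.
Qed.

Lemma sum_mistakes_count :
  \sum_(t < T | perc_mistake x y t) 1 = (total_mistakes T x y reg K)%:R :> R.
Proof.
rewrite (sum_mistakes_by_region (fun=> 1)) /total_mistakes natr_sum.
by apply: eq_bigr => k _; rewrite mul1r.
Qed.

Lemma dotv_perc_w_ge_mistakes (g : R) (u : 'rV[R]_n) :
  (0 < K)%N -> 0 <= g ->
  (forall t, (t < T)%N -> (reg t)%:R * g <= y t * dotv (x t) u) ->
  g * ((K%:R + 1) / 2 * (total_mistakes T x y reg K)%:R
       - K%:R * (K%:R - 1) / 2 * mistakes_std T x y reg K)
    <= dotv (perc_w x y T) u.
Proof.
move=> K_gt0 g_ge0 margin.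
pose e k : R := (region_mistakes T x y reg k)%:R.
have -> : mistakes_std T x y reg K = stddev K e.
  by rewrite /mistakes_std /total_mistakes natr_sum.
rewrite /total_mistakes natr_sum.
apply: le_trans (ler_wpM2l g_ge0 (index_weighted_sum_ge K_gt0 e)) _.
rewrite -sum_mistakes_by_region dotv_perc_w mulr_sumr.
by apply: ler_sum => t _; rewrite mulrC margin.
Qed.

End Regions.

Theorem theorem2 (R : realType) (n T : nat)
    (x : nat -> 'rV[R]_n) (y : nat -> R) (gam : nat -> R)
    (Rb : R) (u : 'rV[R]_n) (K : nat) (reg : nat -> nat) :
  (0 < T)%N ->
  (forall t, (t < T)%N -> y t = 1 \/ y t = -1) ->
  (forall t, (t < T)%N -> 0 < gam t) ->
  (forall s t, (s <= t)%N -> (t < T)%N -> gam t <= gam s) ->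
  (forall t, (t < T)%N -> normv (x t) <= Rb) ->
  let ghat := gam T.-1 in
  (K%:Z = Num.ceil (Rb / ghat) - 1)%R ->
  (forall t, (t < T)%N -> ghat <= y t * dotv u (x t)) ->
  (forall t, (t < T)%N -> (1 <= reg t <= K)%N) ->
  (forall t, (t < T)%N -> (reg t)%:R * ghat <= y t * dotv (x t) u) ->
  let eps := (total_mistakes T x y reg K)%:R in
  let eps_s := mistakes_std T x y reg K in
  Num.sqrt eps <=
    (Rb * normv u
     + Num.sqrt (Rb ^+ 2 * normv u ^+ 2
                 + eps_s * K%:R * (K%:R + 1) ^+ 2 * Num.sqrt (K%:R - 1) * ghat ^+ 2))
    / (ghat * (K%:R + 1)).
Proof.
(* Only the region margins matter: the ordering of the margins, the global
   margin of u and the value of K are not used. *)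
move=> T_gt0 y_sign gam_gt0 _ x_le ghat _ _ reg_range reg_margin; cbv zeta.
set eps := (total_mistakes T x y reg K)%:R; set eps_s := mistakes_std T x y reg K.
have ghat_gt0 : 0 < ghat by apply: gam_gt0; rewrite prednK.
have K_gt0 : (0 < K)%N by case/andP: (reg_range 0%N T_gt0); apply: leq_trans.
have Rb_ge0 : 0 <= Rb := le_trans (normv_ge0 _) (x_le 0%N T_gt0).
have w_norm := normv_perc_w_le Rb_ge0 y_sign x_le.
rewrite (sum_mistakes_count x y reg_range) -/eps in w_norm.
have w_u := dotv_perc_w_ge_mistakes reg_range K_gt0 (ltW ghat_gt0) reg_margin.
rewrite -/eps -/eps_s in w_u.
have K_ge1 : 1 <= (K%:R : R) by rewrite ler1n.
set q := Num.sqrt (K%:R - 1).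
(* The paper weakens K - 1 to (K + 1) sqrt (K - 1). *)
have sd_le : K%:R * (K%:R - 1) / 2 * eps_s <= eps_s * K%:R * (K%:R + 1) * q / 2.
  have sdK_ge0 : 0 <= eps_s * K%:R / 2 by rewrite !mulr_ge0 ?invr_ge0 ?sqrtr_ge0.
  have := ler_wpM2l sdK_ge0 (subr1_le_sqrt K_ge1); rewrite -/q; lra.
pose a := ghat * ((K%:R + 1) / 2); pose d := ghat * (eps_s * K%:R * (K%:R + 1) * q / 2).
have key : a * Num.sqrt eps ^+ 2 <= Rb * normv u * Num.sqrt eps + d.
  have := le_trans w_u (le_trans (dotv_le_normv _ u) (ler_wpM2r (normv_ge0 u) w_norm)).
  have := ler_wpM2l (ltW ghat_gt0) sd_le.
  rewrite /a /d sqr_sqrtr ?ler0n //; nra.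
have -> : ghat * (K%:R + 1) = 2 * a by rewrite /a; field.
have -> : eps_s * K%:R * (K%:R + 1) ^+ 2 * q * ghat ^+ 2 = 4 * a * d by rewrite /a /d; field.
rewrite -exprMn; apply: quadratic_le_root key.
by rewrite /a mulr_gt0 //; lra.
Qed.
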